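(* Let $q\in\mathbb R$ and let $\mu$ be a compactly supported Borel probability measure on $\mathbb R^n$. Then for every $E\subseteq\operatorname{supp}\mu$, $$\mathsf b^q_\mu(E)=\sup_{F\subseteq E}\ \inf\Big\{\sup_i\Theta^q_\mu(F_i):F\subseteq\bigcup_iF_i,\ F_i\text{ bounded}\Big\}$$ and $$\mathsf B^q_\mu(E)=\inf\Big\{\sup_i\mathsf\Delta^q_\mu(E_i):E\subseteq\bigcup_iE_i,\ E_i\text{ bounded}\Big\},$$ where the unions are countable.
   Context: $B(x,r)$ is the closed ball. A centred covering of $E$ by $r$-balls is a family $(B(x_i,r))_i$ with $x_i\in E$ covering $E$; a centred packing is a family $(B(x_i,r))_i$ of pairwise disjoint closed balls with $x_i\in E$. $N^q_{\mu,r}(E)=\inf\sum_i\mu(B(x_i,r))^q$ over centred coverings, $M^q_{\mu,r}(E)=\sup\sum_i\mu(B(x_i,r))^q$ over centred packings. $\mathsf L^{q,t}_\mu(E)=\liminf_{r\to0}N^q_{\mu,r}(E)(2r)^t$, $\mathsf C^{q,t}_\mu(E)=\limsup_{r\to0}M^q_{\mu,r}(E)(2r)^t$; $\overline{\mathsf H}^{q,t}_\mu(E)=\inf\{\sum_i\mathsf L^{q,t}_\mu(E_i):E\subseteq\bigcup_iE_i,\ E_i\text{ bounded}\}$, $\mathsf H^{q,t}_\mu(E)=\sup_{F\subseteq E}\overline{\mathsf H}^{q,t}_\mu(F)$, $\mathsf P^{q,t}_\mu(E)=\inf\{\sum_i\mathsf C^{q,t}_\mu(E_i):E\subseteq\bigcup_iE_i,\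 E_i\text{ bounded}\}$. The numbers $\mathsf b^q_\mu(E),\mathsf B^q_\mu(E),\mathsf\Delta^q_\mu(E),\Theta^q_\mu(E)\in[-\infty,\infty]$ are the unique thresholds in $t$ at which $\mathsf H^{q,t}_\mu(E)$, $\mathsf P^{q,t}_\mu(E)$, $\mathsf C^{q,t}_\mu(E)$, $\mathsf L^{q,t}_\mu(E)$ respectively jump from $\infty$ (for smaller $t$) to $0$ (for larger $t$). *)

From HB Require Import structures.
From mathcomp Require Import all_boot all_order all_algebra.
From mathcomp Require Import all_classical all_reals all_analysis.
Set Implicit Arguments. Unset Strict Implicit. Unset Printing Implicit Defensive.
Import Order.TTheory GRing.Theory Num.Theory numFieldNormedType.Exports.
Local Open Scope classical_set_scope.
Local Open Scope ring_scope.

Section Multifractal.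
Variables (R : realType) (n : nat).

Definition Rn : Type := g_sigma_algebraType (open : set (set 'rV[R]_n)).

Definition edist (x y : 'rV[R]_n) : R :=
  Num.sqrt (\sum_(i < n) (x ord0 i - y ord0 i) ^+ 2).
Definition cball (x : Rn) (r : R) : set Rn := [set y | edist x y <= r].

Definition ebounded (A : set Rn) : Prop := exists (c : Rn) (r : R), A `<=` cball c r.

Variable mu : probability Rn R.

Definition supp : set Rn :=
  [set x | forall U : set 'rV[R]_n, open U -> U x -> (0 < mu U)%E].

(* a^q for a = mu(B) in [0,1], with the conventions 0^q = +oo (q <= 0), 0^q = 0 (q > 0) *)
Definition qpow (a : \bar R) (q : R) : \bar R :=
  match a with
  | r%:E => if 0 < r then (r `^ q)%:E else if q <= 0 then +oo%E else 0%E
  | +oo%E => +oo%E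
  | -oo%E => 0%E
  end.

(* N^q_{mu,r}(E): inf over centred coverings (given by their set of centres C) *)
Definition Ncov (q r : R) (E : set Rn) : \bar R :=
  ereal_inf [set s | exists C : set Rn, C `<=` E /\
     E `<=` \bigcup_(x in C) cball x r /\
     s = (\esum_(x in C) qpow (mu (cball x r)) q)%E].

Definition Mpack (q r : R) (E : set Rn) : \bar R :=
  ereal_sup [set s | exists C : set Rn, C `<=` E /\
     (forall x y, C x -> C y -> x <> y -> cball x r `&` cball y r = set0) /\
     s = (\esum_(x in C) qpow (mu (cball x r)) q)%E].

Definition liminf0 (f : R -> \bar R) : \bar R :=
  ereal_sup [set ereal_inf [set f r | r in [set r | 0 < r < d]] | d in [set d : R | 0 < d]].
Definition limsup0 (f : R -> \bar R) : \bar R :=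
  ereal_inf [set ereal_sup [set f r | r in [set r | 0 < r < d]] | d in [set d : R | 0 < d]].

Definition Lq (q t : R) (E : set Rn) : \bar R :=
  liminf0 (fun r => (Ncov q r E * ((2 * r) `^ t)%:E)%E).
Definition Cq (q t : R) (E : set Rn) : \bar R :=
  limsup0 (fun r => (Mpack q r E * ((2 * r) `^ t)%:E)%E).

Definition Hbar (q t : R) (E : set Rn) : \bar R :=
  ereal_inf [set (\sum_(0 <= i <oo) Lq q t (Ei i))%E |
     Ei in [set Ei : nat -> set Rn | E `<=` \bigcup_i Ei i /\ forall i, ebounded (Ei i)]].
Definition Hq (q t : R) (E : set Rn) : \bar R :=
  ereal_sup [set Hbar q t F | F in [set F | F `<=` E]].
Definition Pq (q t : R) (E : set Rn) : \bar R :=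
  ereal_inf [set (\sum_(0 <= i <oo) Cq q t (Ei i))%E |
     Ei in [set Ei : nat -> set Rn | E `<=` \bigcup_i Ei i /\ forall i, ebounded (Ei i)]].

(* threshold where t |-> f t jumps from +oo to 0 : inf {t | f t = 0} *)
Definition threshold (f : R -> \bar R) : \bar R :=
  ereal_inf [set t%:E | t in [set t : R | f t = 0%E]].

Definition b_dim (q : R) (E : set Rn) : \bar R := threshold (fun t => Hq q t E).
Definition B_dim (q : R) (E : set Rn) : \bar R := threshold (fun t => Pq q t E).
Definition Delta_dim (q : R) (E : set Rn) : \bar R := threshold (fun t => Cq q t E).
Definition Theta_dim (q : R) (E : set Rn) : \bar R := threshold (fun t => Lq q t E).

End Multifractal.

From HB Require Import structures.
From mathcomp Require Import all_boot all_order all_algebra.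
From mathcomp Require Import all_classical all_reals all_analysis.
From mathcomp Require Import lra ring.
Import Order.TTheory GRing.Theory Num.Theory numFieldNormedType.Exports.
Local Open Scope classical_set_scope.
Local Open Scope ring_scope.
Local Open Scope ereal_scope.

(* Every set function t |-> Phi t A involved is nonnegative, nonincreasing in
   t, and jumps: once finite at t it vanishes beyond t (for L and C this is
   because the gauge (2r)^s tends to 0).  For such functions the threshold
   commutes with suprema, and the threshold of the covering construction
   inf_{covers} sum_i Phi t (E_i) is inf_{covers} sup_i threshold(Phi . (E_i)):
   a nonnegative series vanishes iff all its terms vanish, and it is finite
   only if all its terms are. *)

Lemma lee_real_dense (R : realType) (x y : \bar R) :
  (forall t : R, y < t%:E -> x <= t%:E) -> x <= y.
Proof.
case: y => [r||] xley.
- by apply/lee_addgt0Pr => e e0; rewrite -EFinD; apply: xley; rewrite lte_fin; lra.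
- exact: leey.
- case: x xley => [r'||] // xley; last by have := xley 0%R (ltNyr _).
  by have := xley (r' - 1)%R (ltNyr _); rewrite lee_fin => ?; exfalso; lra.
Qed.

Lemma lty_ubound_gt0 (R : realType) (x : \bar R) :
  x < +oo -> exists2 M : R, (0 < M)%R & x < M%:E.
Proof.
case: x => [r _||] //; last by exists 1%R => //; exact: ltNyr.
by exists (`|r| + 1)%R; rewrite ?lte_fin; have := ler_norm r; have := normr_ge0 r; lra.
Qed.

Lemma threshold_le (R : realType) (f : R -> \bar R) (t : R) :
  f t = 0 -> threshold f <= t%:E.
Proof. by move=> ft0; apply: ereal_inf_lbound; exists t. Qed.

Lemma threshold_lt_eq0 (R : realType) (f : R -> \bar R) (t : R) :
  (forall t, 0 <= f t) -> (forall t t', (t <= t')%R -> f t' <= f t) ->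
  threshold f < t%:E -> f t = 0.
Proof.
move=> f_ge0 f_anti /ereal_inf_lt[_ [t0 /= ft0 <-]]; rewrite lte_fin => t0t.
by apply/eqP; rewrite eq_le f_ge0 andbT -ft0 f_anti // ltW.
Qed.

Lemma threshold_ereal_sup (R : realType) (I : Type) (S : set I)
    (h : R -> I -> \bar R) (i0 : I) :
  S i0 -> (forall t i, 0 <= h t i) ->
  (forall t t' i, (t <= t')%R -> h t' i <= h t i) ->
  threshold (fun t => ereal_sup [set h t i | i in S]) =
  ereal_sup [set threshold (h ^~ i) | i in S].
Proof.
move=> Si0 h_ge0 h_anti; apply/eqP; rewrite eq_le; apply/andP; split.
- apply: lee_real_dense => t supt; apply: threshold_le.
  apply/eqP; rewrite eq_le; apply/andP; split.
  + apply: ge_ereal_sup => _ [i Si <-].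
    suff -> : h t i = 0 by [].
    apply: (@threshold_lt_eq0 _ (h ^~ i)) => [t'|t1 t2|]; [exact: h_ge0|exact: h_anti|].
    by apply: le_lt_trans supt; apply: ereal_sup_ubound; exists i.
  + by apply: le_trans (h_ge0 t i0) _; apply: ereal_sup_ubound; exists i0.
- apply: ge_ereal_sup => _ [i Si <-].
  apply: le_ereal_inf_tmp => _ [t /= ht0 <-]; apply: threshold_le.
  apply/eqP; rewrite eq_le h_ge0 andbT -ht0.
  by apply: ereal_sup_ubound; exists i.
Qed.

Section CoverThreshold.
Variables (R : realType) (T : Type) (bounded : set T -> Prop).
Variable Phi : R -> set T -> \bar R.
Hypothesis Phi_ge0 : forall t A, 0 <= Phi t A.
Hypothesis Phi_anti : forall t t' A, (t <= t')%R -> Phi t' A <= Phi t A.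
Hypothesis Phi_jump : forall t t' A, Phi t A < +oo -> (t < t')%R -> Phi t' A = 0.

Definition bounded_covers (E : set T) : set (nat -> set T) :=
  [set Ei | E `<=` \bigcup_i Ei i /\ forall i, bounded (Ei i)].

Definition cover_sum (t : R) (E : set T) : \bar R :=
  ereal_inf [set \sum_(0 <= i <oo) Phi t (Ei i) | Ei in bounded_covers E].

Lemma cover_sum_ge0 t E : 0 <= cover_sum t E.
Proof.
by apply: le_ereal_inf_tmp => _ [Ei _ <-]; apply: nneseries_ge0 => *.
Qed.

Lemma cover_sum_anti t t' E : (t <= t')%R -> cover_sum t' E <= cover_sum t E.
Proof.
move=> tt'; apply: le_ereal_inf_tmp => _ [Ei cEi <-].
apply: le_trans (ereal_inf_lbound _) _; first by exists Ei.
by apply: lee_nneseries => *; [exact: Phi_ge0 | exact: Phi_anti].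
Qed.

Lemma threshold_le_finite t A : Phi t A < +oo -> threshold (Phi ^~ A) <= t%:E.
Proof.
move=> fin; apply: lee_real_dense => t' tt'; apply: threshold_le.
by rewrite lte_fin in tt'; exact: Phi_jump tt'.
Qed.

Lemma nneseries_lty_term t Ei i :
  \sum_(0 <= j <oo) Phi t (Ei j) < +oo -> Phi t (Ei i) < +oo.
Proof.
apply: le_lt_trans.
have := @nneseries_lim_ge _ (fun j => Phi t (Ei j)) xpredT 0%N i.+1.
move=> /(_ (fun _ _ _ => Phi_ge0 _ _)); apply: le_trans.
by rewrite big_nat_recr //= leeDr // sume_ge0.
Qed.

Lemma threshold_cover_sum E : threshold (cover_sum ^~ E) =
  ereal_inf [set ereal_sup (range (fun i => threshold (Phi ^~ (Ei i))))
            | Ei in bounded_covers E].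
Proof.
apply/eqP; rewrite eq_le; apply/andP; split.
- apply: le_ereal_inf_tmp => _ [Ei cEi <-].
  apply: lee_real_dense => t supt; apply: threshold_le.
  apply/eqP; rewrite eq_le cover_sum_ge0 andbT.
  apply: le_trans (ereal_inf_lbound _) _; first by exists Ei.
  rewrite eseries0 // => i _ _.
  apply: (@threshold_lt_eq0 _ (Phi ^~ (Ei i))) => [t'|t1 t2|].
  - exact: Phi_ge0.
  - exact: Phi_anti.
  by apply: le_lt_trans supt; apply: ereal_sup_ubound; exists i.
- apply: le_ereal_inf_tmp => _ [t /= sum0 <-].
  have : cover_sum t E < 1%:E by rewrite sum0 lte_fin.
  move=> /ereal_inf_lt[_ [Ei cEi <-]] sum_lt1.
  apply: le_trans (ereal_inf_lbound _) _; first by exists Ei.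
  apply: ge_ereal_sup => _ [i _ <-]; apply: threshold_le_finite.
  exact/nneseries_lty_term/(lt_trans sum_lt1 (ltry _)).
Qed.

End CoverThreshold.

Lemma liminf0_ge0 (R : realType) (f : R -> \bar R) :
  (forall r, 0 <= f r) -> 0 <= liminf0 f.
Proof.
move=> f_ge0; apply: le_ereal_sup_tmp.
eexists; first by exists 1%R; rewrite /= ?ltr01.
by apply: le_ereal_inf_tmp => _ [r _ <-].
Qed.

Lemma limsup0_ge0 (R : realType) (f : R -> \bar R) :
  (forall r, 0 <= f r) -> 0 <= limsup0 f.
Proof.
move=> f_ge0; apply: le_ereal_inf_tmp => _ [d /= d0 <-].
apply: le_ereal_sup_tmp; exists (f (d / 2)%R) => //.
by exists (d / 2)%R => //=; apply/andP; split; lra.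
Qed.

Lemma le_liminf0 (R : realType) (d : R) (f g : R -> \bar R) : (0 < d)%R ->
  (forall r, (0 < r < d)%R -> f r <= g r) -> liminf0 f <= liminf0 g.
Proof.
move=> d0 fg; apply: ge_ereal_sup => _ [d' /= d'0 <-].
have dd'0 : (0 < Num.min d' d)%R by rewrite lt_min d'0.
apply: le_ereal_sup_tmp; eexists; first by exists (Num.min d' d).
apply: le_ereal_inf_tmp => _ [r /= /andP[r0 rdd] <-].
move: rdd; rewrite lt_min => /andP[rd' rd].
apply: le_trans (fg r _); last by rewrite r0.
by apply: ereal_inf_lbound; exists r => //=; rewrite r0.
Qed.

Lemma le_limsup0 (R : realType) (d : R) (f g : R -> \bar R) : (0 < d)%R ->
  (forall r, (0 < r < d)%R -> f r <= g r) -> limsup0 f <= limsup0 g.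
Proof.
move=> d0 fg; apply: le_ereal_inf_tmp => _ [d' /= d'0 <-].
have dd'0 : (0 < Num.min d' d)%R by rewrite lt_min d'0.
apply: le_trans (ereal_inf_lbound _) _; first by exists (Num.min d' d).
apply: ge_ereal_sup => _ [r /= /andP[r0 rdd] <-].
move: rdd; rewrite lt_min => /andP[rd' rd].
apply: le_trans (fg r _) _; first by rewrite r0.
by apply: ereal_sup_ubound; exists r => //=; rewrite r0.
Qed.

Lemma powR_le_of_le_root (R : realType) (x c s : R) : (0 < s)%R -> (0 < c)%R ->
  (0 <= x)%R -> (x <= c `^ s^-1)%R -> (x `^ s <= c)%R.
Proof.
move=> s0 c0 x0 xc.
have -> : c = ((c `^ s^-1) `^ s)%R by rewrite -powRrM mulVf ?powRr1 ?gt_eqF ?ltW.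
by apply: (ge0_ler_powR (ltW s0)); rewrite ?nnegrE ?powR_ge0.
Qed.

Section Gauge.
Variables (R : realType) (f : R -> \bar R).
Hypothesis f_ge0 : forall r, 0 <= f r.

Definition gauged (t r : R) : \bar R := f r * ((2 * r) `^ t)%:E.

Lemma gauged_ge0 t r : 0 <= gauged t r.
Proof. by rewrite mule_ge0 // lee_fin powR_ge0. Qed.

Lemma gauged_anti t t' r : (0 < r < 2^-1)%R -> (t <= t')%R ->
  gauged t' r <= gauged t r.
Proof.
move=> /andP[r0 r2] tt'; apply: lee_wpmul2l => //; rewrite lee_fin.
by apply: ger_powR => //; apply/andP; split; lra.
Qed.

Lemma gauged_shift_le t s r M e : (0 < s)%R -> (0 < r)%R -> (0 < M)%R ->
  (0 < e)%R -> (2 * r <= (e / M) `^ s^-1)%R ->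
  gauged t r <= M%:E -> gauged (t + s) r <= e%:E.
Proof.
move=> s0 r0 M0 e0 small gM.
rewrite /gauged powRD; last by apply/implyP => _; rewrite mulf_neq0 ?gt_eqF.
have -> : e = (M * (e / M))%R by field; rewrite gt_eqF.
rewrite !EFinM muleA; apply: lee_pmul; rewrite ?gauged_ge0 ?lee_fin ?powR_ge0 //.
by apply: powR_le_of_le_root; rewrite ?divr_gt0 //; lra.
Qed.

Lemma limsup0_gauged_jump t t' :
  limsup0 (gauged t) < +oo -> (t < t')%R -> limsup0 (gauged t') = 0.
Proof.
move=> /lty_ubound_gt0[M M0 /ereal_inf_lt[_ [d /= d0 <-]] supM] tt'.
have gM r : (0 < r < d)%R -> gauged t r <= M%:E.
  move=> rd; apply/ltW/(le_lt_trans _ supM).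
  by apply: ereal_sup_ubound; exists r.
apply/eqP; rewrite eq_le limsup0_ge0 ?andbT //; last exact: gauged_ge0.
apply/lee_addgt0Pr => e e0; rewrite add0e.
have s0 : (0 < t' - t)%R by lra.
pose rho := Num.min d ((e / M) `^ (t' - t)^-1 / 2)%R.
have rho0 : (0 < rho)%R by rewrite lt_min d0 divr_gt0 ?powR_gt0 ?divr_gt0.
apply: le_trans (ereal_inf_lbound _) _; first by exists rho.
apply: ge_ereal_sup => _ [r /= /andP[r0 rrho] <-].
move: rrho; rewrite lt_min => /andP[rd rsmall].
have -> : t' = (t + (t' - t))%R by ring.
by apply: (gauged_shift_le t _ _ M _ s0 r0 M0 e0); [lra | apply: gM; rewrite r0].
Qed.

Lemma liminf0_gauged_jump t t' :
  liminf0 (gauged t) < +oo -> (t < t')%R -> liminf0 (gauged t') = 0.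
Proof.
move=> /lty_ubound_gt0[M M0 supM] tt'.
have gM d : (0 < d)%R -> exists2 r, (0 < r < d)%R & gauged t r <= M%:E.
  move=> d0; have : ereal_inf [set gauged t r | r in [set r | (0 < r < d)%R]] < M%:E.
    by apply: le_lt_trans supM; apply: ereal_sup_ubound; exists d.
  by move=> /ereal_inf_lt[_ [r rd <-] /ltW]; exists r.
apply/eqP; rewrite eq_le liminf0_ge0 ?andbT; last exact: gauged_ge0.
apply/lee_addgt0Pr => e e0; rewrite add0e.
have s0 : (0 < t' - t)%R by lra.
apply: ge_ereal_sup => _ [d /= d0 <-].
pose rho := Num.min d ((e / M) `^ (t' - t)^-1 / 2)%R.
have rho0 : (0 < rho)%R by rewrite lt_min d0 divr_gt0 ?powR_gt0 ?divr_gt0.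
have [r /andP[r0 rrho] grM] := gM rho rho0.
move: rrho; rewrite lt_min => /andP[rd rsmall].
apply: le_trans (ereal_inf_lbound _) _; first by exists r => //=; rewrite r0.
have -> : t' = (t + (t' - t))%R by ring.
by apply: (gauged_shift_le t _ _ M _ s0 r0 M0 e0); first lra.
Qed.

End Gauge.

Lemma qpow_ge0 (R : realType) (a : \bar R) (q : R) : 0 <= qpow a q.
Proof.
by case: a => [r||] //=; case: ifPn => _; [rewrite lee_fin powR_ge0 | case: ifPn].
Qed.

Section Spectra.
Variables (R : realType) (n : nat) (mu : probability (Rn R n) R) (q : R).

Lemma Ncov_ge0 r E : 0 <= Ncov mu q r E.
Proof.
apply: le_ereal_inf_tmp => _ [C [_ [_ ->]]].
by apply: esum_ge0 => *; exact: qpow_ge0.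
Qed.

Lemma Mpack_ge0 r E : 0 <= Mpack mu q r E.
Proof.
apply: le_ereal_sup_tmp; exists 0 => //.
by exists set0; do 2!split => //; rewrite esum_set0.
Qed.

Lemma Lq_ge0 t A : 0 <= Lq mu q t A.
Proof. by apply: liminf0_ge0 => r; exact: gauged_ge0 (Ncov_ge0 ^~ A) _ _. Qed.

Lemma Cq_ge0 t A : 0 <= Cq mu q t A.
Proof. by apply: limsup0_ge0 => r; exact: gauged_ge0 (Mpack_ge0 ^~ A) _ _. Qed.

Lemma Lq_anti t t' A : (t <= t')%R -> Lq mu q t' A <= Lq mu q t A.
Proof.
move=> tt'; apply: (@le_liminf0 _ 2^-1) => [|r r2]; first by rewrite invr_gt0.
exact: gauged_anti (Ncov_ge0 ^~ A) _ _ _ r2 tt'.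
Qed.

Lemma Cq_anti t t' A : (t <= t')%R -> Cq mu q t' A <= Cq mu q t A.
Proof.
move=> tt'; apply: (@le_limsup0 _ 2^-1) => [|r r2]; first by rewrite invr_gt0.
exact: gauged_anti (Mpack_ge0 ^~ A) _ _ _ r2 tt'.
Qed.

Lemma Lq_jump t t' A : Lq mu q t A < +oo -> (t < t')%R -> Lq mu q t' A = 0.
Proof. exact: liminf0_gauged_jump (Ncov_ge0 ^~ A) t t'. Qed.

Lemma Cq_jump t t' A : Cq mu q t A < +oo -> (t < t')%R -> Cq mu q t' A = 0.
Proof. exact: limsup0_gauged_jump (Mpack_ge0 ^~ A) t t'. Qed.

End Spectra.

Theorem proposition2p6 (R : realType) (n : nat) (mu : probability (Rn R n) R)
    (q : R) :
  compact (supp mu : set 'rV[R]_n) ->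
  forall E : set (Rn R n), E `<=` supp mu ->
  b_dim mu q E =
    ereal_sup [set ereal_inf [set ereal_sup (range (fun i => Theta_dim mu q (Fi i))) |
        Fi in [set Fi : nat -> set (Rn R n) |
                 F `<=` \bigcup_i Fi i /\ forall i, ebounded (Fi i)]]
      | F in [set F | F `<=` E]]
  /\
  B_dim mu q E =
    ereal_inf [set ereal_sup (range (fun i => Delta_dim mu q (Ei i))) |
        Ei in [set Ei : nat -> set (Rn R n) |
                 E `<=` \bigcup_i Ei i /\ forall i, ebounded (Ei i)]].
Proof.
move=> _ E _; split; last first.
  exact: (@threshold_cover_sum _ _ (@ebounded R n) _ (@Cq_ge0 R n mu q)
    (@Cq_anti R n mu q) (@Cq_jump R n mu q)).
have Hbar_ge0 t F : 0 <= Hbar mu q t F := @cover_sum_ge0 _ _ _ _ (@Lq_ge0 R n mu q) t F.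
have Hbar_anti t t' F : (t <= t')%R -> Hbar mu q t' F <= Hbar mu q t F :=
  @cover_sum_anti _ _ _ _ (@Lq_ge0 R n mu q) (@Lq_anti R n mu q) t t' F.
rewrite /b_dim /Hq (@threshold_ereal_sup _ _ [set F | F `<=` E]
  (fun t F => Hbar mu q t F) E (@subset_refl _ E) Hbar_ge0 Hbar_anti).
congr ereal_sup; apply: eq_imagel => F _.
exact: (@threshold_cover_sum _ _ (@ebounded R n) _ (@Lq_ge0 R n mu q)
  (@Lq_anti R n mu q) (@Lq_jump R n mu q)).
Qed.
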